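(* Let $G=(\mathcal V,\mathcal E,a)$ and $G'=(\mathcal V',\mathcal E',a')$ be finite undirected graphs with discrete node attributes. For any $u\in\mathcal V$, $u'\in\mathcal V'$ and any $k\ge0$ such that $\kappa^{(k)}_{\mathrm{walk}}(u,u)>0$ and $\kappa^{(k)}_{\mathrm{walk}}(u',u')>0$, $$d_{\kappa^{(k)}_{\mathrm{subtree}}}(u,u')\ \ge\ d_{\hat\kappa^{(k)}_{\mathrm{walk}}}(u,u').$$
   Context: $\mathcal N(u)$ denotes neighbors; $\delta$ is the Dirac kernel. Walks: $\mathcal W_k(G,u)$ is the set of sequences $(p_0=u,\dots,p_k)$ with consecutive nodes adjacent (repetitions allowed), $a(p)=(a(p_0),\dots,a(p_k))$. Walk kernel: $\kappa^{(k)}_{\mathrm{walk}}(u,u')=\sum_{p\in\mathcal W_k(G,u)}\sum_{p'\in\mathcal W_k(G',u')}\delta(a(p),a'(p'))$. The normalized kernel of $\kappa$ is $\hat\kappa(u,u')=\kappa(u,u')/\sqrt{\kappa(u,u)\kappa(u',u')}$. Weisfeiler–Lehman relabeling: $a_0=a$, $a_{i}(u)=f\big(a_{i-1}(u),\{\!\{a_{i-1}(v):v\in\mathcal N(u)\}\!\}\big)$ with $f$ injective and shared by both graphs; $\kappa^{(k)}_{\mathrm{subtree}}(u,u')=\delta(a_k(u),a'_k(u'))$. For a kernel $\kappa$, $d_\kappa(u,u')=\sqrt{\kappa(u,u)+\kappa(u',u')-2\kappa(u,u')}$ (the distance between feature-map images). *)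

From HB Require Import structures.
From mathcomp Require Import all_boot all_order all_algebra.
Set Implicit Arguments. Unset Strict Implicit. Unset Printing Implicit Defensive.
Import Order.TTheory GRing.Theory Num.Theory.
Local Open Scope ring_scope.

(* A finite undirected graph with discrete node attributes is given by a
   finite node type V, a symmetric adjacency relation E : rel V and an
   attribute map a : V -> L into a discrete (eqType) label set L. *)

Definition is_walk (V : finType) (E : rel V) (k : nat) (u : V)
  (p : k.+1.-tuple V) : bool :=
  (thead p == u) && path E (thead p) (behead p).

Definition walk_kernel (R : rcfType) (L : eqType)
  (V : finType) (E : rel V) (a : V -> L)
  (V' : finType) (E' : rel V') (a' : V' -> L)
  (k : nat) (u : V) (u' : V') : R :=
  \sum_(p : k.+1.-tuple V | is_walk E u p)
    \sum_(p' : k.+1.-tuple V' | is_walk E' u' p')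
       (map a p == map a' p')%:R.

Definition normalized_walk_kernel (R : rcfType) (L : eqType)
  (V : finType) (E : rel V) (a : V -> L)
  (V' : finType) (E' : rel V') (a' : V' -> L)
  (k : nat) (u : V) (u' : V') : R :=
  walk_kernel R E a E' a' k u u' / Num.sqrt (walk_kernel R E a E a k u u * walk_kernel R E' a' E' a' k u' u').

Definition nbrs (V : finType) (E : rel V) (u : V) : seq V :=
  [seq v <- enum V | E u v].

(* Weisfeiler-Lehman relabeling with a shared relabeling function
   f : L -> seq L -> L (the seq argument is the multiset of neighbor labels). *)
Fixpoint wl (L : eqType) (f : L -> seq L -> L)
  (V : finType) (E : rel V) (a : V -> L) (i : nat) (u : V) : L :=
  match i with
  | 0 => a u
  | i'.+1 => f (wl f E a i' u) [seq wl f E a i' v | v <- nbrs E u]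
  end.

Definition multiset_injective (L : eqType) (f : L -> seq L -> L) : Prop :=
  forall x y s t, f x s = f y t <-> (x = y /\ perm_eq s t).

Definition subtree_kernel (R : rcfType) (L : eqType) (f : L -> seq L -> L)
  (V : finType) (E : rel V) (a : V -> L)
  (V' : finType) (E' : rel V') (a' : V' -> L)
  (k : nat) (u : V) (u' : V') : R :=
  (wl f E a k u == wl f E' a' k u')%:R.

Definition kdist (R : rcfType) (kuu ku'u' kuu' : R) : R :=
  Num.sqrt (kuu + ku'u' - 2 * kuu').

(* If two nodes receive the same Weisfeiler-Lehman label after k rounds, then
   the multisets of attribute sequences of their length-k walks coincide (by
   induction on k: a walk is a first node followed by a walk from one of its
   neighbours, and injectivity of the relabeling matches the neighbour
   multisets).  Hence all three walk-kernel values agree, the normalized walk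
   kernel is 1 throughout and both distances vanish.  Otherwise the subtree
   distance is sqrt 2, while the normalized walk kernel is nonnegative and
   equals 1 on the diagonal, so the walk distance is at most sqrt 2. *)

From mathcomp Require Import all_boot all_order all_algebra.
From mathcomp Require Import lra.
Set Implicit Arguments. Unset Strict Implicit. Unset Printing Implicit Defensive.
Import Order.TTheory GRing.Theory Num.Theory.
Local Open Scope ring_scope.

Lemma big_perm_map_rel (R : Type) (idx : R) (op : Monoid.com_law idx)
    (A B C : eqType) (xs : seq A) (ys : seq B) (phi : A -> C) (psi : B -> C)
    (g : A -> R) (h : B -> R) :
  perm_eq (map phi xs) (map psi ys) ->
  (forall x y, phi x = psi y -> g x = h y) ->
  \big[op/idx]_(x <- xs) g x = \big[op/idx]_(y <- ys) h y.
Proof.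
move=> + gh; elim: xs ys => [|x xs IHxs] ys perm_xy.
  by case: ys perm_xy => [|y ys /perm_size]; rewrite ?big_nil.
have /mapP[y y_ys phix] : phi x \in map psi ys by rewrite -(perm_mem perm_xy) mem_head.
rewrite big_cons (perm_big _ (perm_to_rem y_ys)) big_cons (gh _ _ phix).
congr (op _ _); apply: IHxs.
rewrite -(perm_cons (phi x)) (perm_trans perm_xy) // phix -map_cons.
by rewrite perm_map // perm_to_rem.
Qed.

Section WalkSum.
Variables (R : nmodType) (L : eqType) (V : finType) (E : rel V) (a : V -> L).

Definition walk_sum (k : nat) (u : V) (F : seq L -> R) : R :=
  \sum_(p : k.+1.-tuple V | is_walk E u p) F (map a p).

Lemma walk_sum0 u F : walk_sum 0 u F = F [:: a u].
Proof.
rewrite /walk_sum (big_pred1 [tuple u]) // => p.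
by case: p => [[|x [|y s]]] //= _; rewrite /is_walk.
Qed.

Lemma is_walkS k u v (q : k.+1.-tuple V) :
  is_walk E u [tuple of v :: q] = (v == u) && E u (thead q) && is_walk E (thead q) q.
Proof.
rewrite /is_walk theadE [in LHS](tuple_eta q) /= eqxx -andbA.
by case: eqP => [->|].
Qed.

Lemma walk_sumS k u F :
  walk_sum k.+1 u F = \sum_(w <- nbrs E u) walk_sum k w (fun s => F (a u :: s)).
Proof.
rewrite /nbrs big_filter big_enum_cond /walk_sum.
rewrite (reindex (fun x : V * k.+1.-tuple V => [tuple of x.1 :: x.2])) /=; last first.
  exists (fun p : k.+2.-tuple V => (thead p, [tuple of behead p])).
    by move=> [v q] _; congr pair; apply: val_inj.
  by move=> p _; rewrite [RHS]tuple_eta.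
rewrite -(pair_big_dep xpredT
  (fun (v : V) (q : k.+1.-tuple V) => is_walk E u [tuple of v :: q])
  (fun (v : V) (q : k.+1.-tuple V) => F (map a [tuple of v :: q]))) /=.
rewrite (bigD1 u) //= [X in _ + X]big1 ?addr0; last first.
  by move=> v /negbTE v_u; rewrite big_pred0 // => q; rewrite is_walkS v_u.
rewrite (partition_big (fun q : k.+1.-tuple V => thead q) (E u)) /=; last first.
  by move=> q; rewrite is_walkS eqxx => /andP[].
apply: eq_bigr => w Euw; apply: eq_bigl => q.
rewrite is_walkS /is_walk !eqxx /=.
by case: eqP => [->|]; rewrite ?Euw ?andbT ?andbF.
Qed.

End WalkSum.

Section WLLabels.
Variables (L : eqType) (f : L -> seq L -> L) (f_inj : multiset_injective f).
Variables (V : finType) (E : rel V) (a : V -> L).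
Variables (V' : finType) (E' : rel V') (a' : V' -> L).

Lemma wl_eq_attr k u u' : wl f E a k u = wl f E' a' k u' -> a u = a' u'.
Proof. by elim: k u u' => [|k IHk] u u' //= /f_inj[/IHk]. Qed.

Lemma walk_sum_wl_eq (R : nmodType) k u u' (F : seq L -> R) :
  wl f E a k u = wl f E' a' k u' -> walk_sum E a k u F = walk_sum E' a' k u' F.
Proof.
elim: k u u' F => [|k IHk] u u' F wl_uu'.
  by rewrite !walk_sum0 (wl_eq_attr wl_uu').
rewrite !walk_sumS -(wl_eq_attr wl_uu').
have /f_inj[_ perm_nbrs] := wl_uu'.
by apply: big_perm_map_rel perm_nbrs _ => v v' /IHk ->.
Qed.

End WLLabels.

Section WalkKernel.
Variables (R : rcfType) (L : eqType).
Variables (V : finType) (E : rel V) (a : V -> L).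
Variables (V' : finType) (E' : rel V') (a' : V' -> L).

Lemma walk_kernel_ge0 k u u' : 0 <= walk_kernel R E a E' a' k u u'.
Proof. by apply: sumr_ge0 => p _; apply: sumr_ge0 => p' _; apply: ler0n. Qed.

Lemma normalized_walk_kernel_ge0 k u u' :
  0 <= normalized_walk_kernel R E a E' a' k u u'.
Proof. by rewrite divr_ge0 ?sqrtr_ge0 ?walk_kernel_ge0. Qed.

Variables (f : L -> seq L -> L) (f_inj : multiset_injective f).
Variables (V0 : finType) (E0 : rel V0) (a0 : V0 -> L).

Lemma walk_kernel_wl_eql k u u' v :
  wl f E a k u = wl f E' a' k u' ->
  walk_kernel R E a E0 a0 k u v = walk_kernel R E' a' E0 a0 k u' v.
Proof.
move=> wl_uu'.
exact: (walk_sum_wl_eq f_inj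
  (fun s => walk_sum E0 a0 k v (fun s0 => (s == s0)%:R : R)) wl_uu').
Qed.

Lemma walk_kernel_wl_eqr k u u' v :
  wl f E a k u = wl f E' a' k u' ->
  walk_kernel R E0 a0 E a k v u = walk_kernel R E0 a0 E' a' k v u'.
Proof.
move=> wl_uu'; apply: eq_bigr => p _.
exact: (walk_sum_wl_eq f_inj (fun s => (map a0 p == s)%:R) wl_uu').
Qed.

End WalkKernel.

Lemma div_sqrt_sqr (R : rcfType) (x : R) : 0 < x -> x / Num.sqrt (x * x) = 1.
Proof. by move=> x_gt0; rewrite -expr2 sqrtr_sqr gtr0_norm ?divff ?gt_eqF. Qed.

Lemma normalized_walk_kernel_diag (R : rcfType) (L : eqType) (V : finType)
    (E : rel V) (a : V -> L) k u :
  0 < walk_kernel R E a E a k u u -> normalized_walk_kernel R E a E a k u u = 1.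
Proof. exact: div_sqrt_sqr. Qed.

Theorem corollary1 (R : rcfType) (L : eqType) (f : L -> seq L -> L)
  (hf : multiset_injective f)
  (V : finType) (E : rel V) (a : V -> L) (hE : symmetric E)
  (V' : finType) (E' : rel V') (a' : V' -> L) (hE' : symmetric E')
  (u : V) (u' : V') (k : nat)
  (hu : 0 < walk_kernel R E a E a k u u)
  (hu' : 0 < walk_kernel R E' a' E' a' k u' u') :
  kdist (subtree_kernel R f E a E a k u u)
        (subtree_kernel R f E' a' E' a' k u' u')
        (subtree_kernel R f E a E' a' k u u')
  >= kdist (normalized_walk_kernel R E a E a k u u)
           (normalized_walk_kernel R E' a' E' a' k u' u')
           (normalized_walk_kernel R E a E' a' k u u').
Proof.
rewrite /kdist /subtree_kernel !eqxx !normalized_walk_kernel_diag //.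
case: eqP => [wl_uu'|_].
  have kuu := walk_kernel_wl_eqr R hf E a u wl_uu'.
  have ku'u' := esym (walk_kernel_wl_eql R hf E' a' u' wl_uu').
  by rewrite /normalized_walk_kernel kuu ku'u' div_sqrt_sqr // -kuu.
have := normalized_walk_kernel_ge0 R E a E' a' k u u'.
by rewrite ler_sqrt /=; lra.
Qed.
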